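(* Let $r\ge 2$ and let $\widehat{\rm TL}_r(q)$ be the affine Temperley–Lieb algebra over $\mathcal K_0$, with elements $e_1\in\widehat{\rm TL}_r(q)$ and $x_1^{\pm1}\in\widehat{\rm TL}_r(q)$ as described in the context. Put $\delta=-(q+q^{-1})$. Then in $\widehat{\rm TL}_r(q)$, $$\delta\,(q\,e_1x_1^2+e_1x_1e_1x_1)=q\,e_1x_1^2e_1+e_1x_1e_1x_1e_1=\delta\,(q\,x_1^2e_1+x_1e_1x_1e_1).$$
   Context: $\mathcal K_0=\mathbb C(q^{1/k})$ with $q$ an indeterminate. The braid group $\Gamma_r$ of type $B$ is generated by $\sigma_1,\dots,\sigma_{r-1},\xi_1$ subject to: $\sigma_i\sigma_{i+1}\sigma_i=\sigma_{i+1}\sigma_i\sigma_{i+1}$, $\sigma_i\sigma_j=\sigma_j\sigma_i$ for $|i-j|>1$, $\xi_1\sigma_j=\sigma_j\xi_1$ for $j\ge2$, and $\sigma_1\xi_1\sigma_1\xi_1=\xi_1\sigma_1\xi_1\sigma_1$. The affine Hecke algebra $\widehat H_r(q)$ is the quotient of the group algebra $\mathcal K_0\Gamma_r$ by the two-sided ideal generated by $(\sigma_i-q)(\sigma_i+q^{-1})$ for all $i$; write $T_i,X_1$ for the images of $\sigma_i,\xi_1$ and $X_{i+1}=T_iX_iT_i$. For $w\in{\rm Sym}_3$ let $T_w=T_{i_1}\cdots T_{i_k}$ for a reduced expression $w=s_{i_1}\cdots s_{i_k}$ ($s_1,s_2$ the simple transpositions), $\ell(w)=k$, and $\mathcal E_3=\sum_{w\in{\rm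 Sym}_3}(-q^{-1})^{\ell(w)}T_w$. The affine Temperley–Lieb algebra is $\widehat{\rm TL}_r(q)=\widehat H_r(q)/\langle\mathcal E_3\rangle$ (for $r\le2$ no quotient is taken). Let $e_i$ be the image of $T_i-q$ and $x_i$ the image of $X_i$. *)

From HB Require Import structures.
From mathcomp Require Import all_boot all_order all_algebra all_field fraction.
Set Implicit Arguments. Unset Strict Implicit. Unset Printing Implicit Defensive.
Import Order.TTheory GRing.Theory Num.Theory.
Local Open Scope ring_scope.

(* K0 = C(q^{1/k}) : rational functions in t := q^{1/k} over the complex
   (algebraic) numbers; q := t^k. *)
Definition K0 : fieldType := {fraction {poly algC}}.
Definition tK : K0 := @FracField.tofrac _ ('X : {poly algC}).
Definition qK (k : nat) : K0 := tK ^+ k.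
Definition deltaK (k : nat) : K0 := - (qK k + (qK k)^-1).

(* E_3 = sum_{w in Sym_3} (-q^{-1})^{l(w)} T_w, written out over the six
   reduced words  1, s1, s2, s1s2, s2s1, s1s2s1. *)
Definition E3 (k : nat) (A : algType K0) (T1 T2 : A) : A :=
  let c := - (qK k)^-1 in
  1 + c *: T1 + c *: T2 + (c ^+ 2) *: (T1 * T2) + (c ^+ 2) *: (T2 * T1)
    + (c ^+ 3) *: (T1 * T2 * T1).

(* Defining relations of the affine Temperley-Lieb algebra TL^_r(q):
   T i (1 <= i <= r-1) and X (= X_1, invertible) satisfy the type-B braid
   relations, the Hecke quadratic relations and (for r >= 3) E_3 = 0.
   (Invertibility of the T i follows from the quadratic relation.) *)
Definition affTL_rel (k r : nat) (A : algType K0) (T : nat -> A) (X : A) : Prop :=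
  (forall i, (1 <= i)%N -> (i.+1 <= r.-1)%N -> T i * T i.+1 * T i = T i.+1 * T i * T i.+1)
  /\ (forall i j, (1 <= i <= r.-1)%N -> (1 <= j <= r.-1)%N ->
        (i.+1 < j)%N \/ (j.+1 < i)%N -> T i * T j = T j * T i)
  /\ (forall j, (2 <= j <= r.-1)%N -> X * T j = T j * X)
  /\ T 1%N * X * T 1%N * X = X * T 1%N * X * T 1%N
  /\ (exists Y : A, X * Y = 1 /\ Y * X = 1)
  /\ (forall i, (1 <= i <= r.-1)%N -> (T i - (qK k)%:A) * (T i + ((qK k)^-1)%:A) = 0)
  /\ ((3 <= r)%N -> E3 k (T 1%N) (T 2%N) = 0).

From HB Require Import structures.
From mathcomp Require Import all_boot all_order all_algebra all_field fraction.
Import GRing.Theory.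
Set Implicit Arguments. Unset Strict Implicit. Unset Printing Implicit Defensive.
Local Open Scope ring_scope.

(* Write T := T_1 = e + q and u := q x^2 + x e x.  Expanding, T x T x = e u + q u
   and x T x T = u e + q u, so the braid relation says exactly that e commutes
   with u, while the quadratic relation says e^2 = delta e.  Hence
   e u e = e^2 u = delta (e u) and e u e = u e^2 = delta (u e), which are the two
   equalities once e u, u e and e u e are multiplied out. *)

Section AlgebraIdentities.

Variables (R : comPzRingType) (A : algType R).

Lemma quadratic_relation_sqr (t : A) (a b : R) :
  (t - a%:A) * (t - b%:A) = 0 -> (t - a%:A) * (t - a%:A) = (b - a) *: (t - a%:A).
Proof.
have -> : t - b%:A = (t - a%:A) - (b - a)%:A.
  by rewrite scalerBl opprB addrA subrK.
by rewrite mulrBr mulr_algr => /subr0_eq.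
Qed.

Lemma comm_sandwich_scaled (d : R) (e u : A) :
  e * e = d *: e -> GRing.comm e u ->
  e * u * e = d *: (e * u) /\ e * u * e = d *: (u * e).
Proof.
move=> ee eu; split.
  by rewrite -mulrA -eu mulrA ee scalerAl.
by rewrite eu -mulrA ee scalerAr.
Qed.

Variables (c : R) (e x : A).

Lemma braid_word_shiftl :
  (e + c%:A) * x * (e + c%:A) * x
  = e * (c *: (x * x) + x * e * x) + c *: (c *: (x * x) + x * e * x).
Proof.
rewrite !(mulrDl, mulrDr, mulr_algl, mulr_algr, scalerDr).
by rewrite -!scalerAl -?scalerAr !scalerA ?mulrA !addrA [LHS](ACl (3*1*4*2)).
Qed.

Lemma braid_word_shiftr :
  x * (e + c%:A) * x * (e + c%:A)
  = (c *: (x * x) + x * e * x) * e + c *: (c *: (x * x) + x * e * x).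
Proof.
rewrite !(mulrDl, mulrDr, mulr_algl, mulr_algr, scalerDr).
by rewrite -!scalerAl -?scalerAr !scalerA ?mulrA !addrA [LHS](ACl (2*1*4*3)).
Qed.

Lemma braid_shift_comm :
  (e + c%:A) * x * (e + c%:A) * x = x * (e + c%:A) * x * (e + c%:A) ->
  GRing.comm e (c *: (x * x) + x * e * x).
Proof. by rewrite braid_word_shiftl braid_word_shiftr => /addIr. Qed.

End AlgebraIdentities.

Theorem lemma2p3 (k : nat) (hk : (0 < k)%N) (r : nat) (hr : (2 <= r)%N)
  (A : algType K0) (T : nat -> A) (X : A) :
  affTL_rel k r T X ->
  let q := qK k in let delta := deltaK k in
  let e1 := T 1%N - q%:A in let x1 := X in
  delta *: (q *: (e1 * x1 ^+ 2) + e1 * x1 * e1 * x1)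
    = q *: (e1 * x1 ^+ 2 * e1) + e1 * x1 * e1 * x1 * e1
  /\ q *: (e1 * x1 ^+ 2 * e1) + e1 * x1 * e1 * x1 * e1
    = delta *: (q *: (x1 ^+ 2 * e1) + x1 * e1 * x1 * e1).
Proof.
move=> [_ [_ [_ [braid [_ [quad _]]]]]] q delta e x.
have T1E : T 1%N = e + q%:A by rewrite /e subrK.
have ee : e * e = delta *: e.
  have r1 : (1 <= 1 <= r.-1)%N by rewrite -subn1 subn_gt0.
  have -> : delta = - q^-1 - q by rewrite /delta /deltaK opprD addrC.
  by apply: quadratic_relation_sqr; rewrite scaleNr opprK; exact: quad.
have eu : GRing.comm e (q *: (x * x) + x * e * x).
  by apply: braid_shift_comm; rewrite -T1E.
have [eue_l eue_r] := comm_sandwich_scaled ee eu.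
have eu_expand : e * (q *: (x * x) + x * e * x) = q *: (e * x ^+ 2) + e * x * e * x.
  by rewrite mulrDr -scalerAr expr2 !mulrA.
have ue_expand : (q *: (x * x) + x * e * x) * e = q *: (x ^+ 2 * e) + x * e * x * e.
  by rewrite mulrDl -scalerAl expr2.
have eue_expand : e * (q *: (x * x) + x * e * x) * e
  = q *: (e * x ^+ 2 * e) + e * x * e * x * e.
  by rewrite eu_expand mulrDl -scalerAl.
by rewrite -eu_expand -ue_expand -eue_expand -eue_l -eue_r.
Qed.
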